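(* Let $\psi:\mathbb R^n\to\mathbb R$ be convex with $\psi(0)=0$ and $0\in\partial\psi(0)$. Let $t>0$, $S:=S(0,0,t)=\{x:\psi(x)\le t\}$, and $y\in S$. Then $$\partial\psi^*\Big(\tfrac12\big(t-\psi(y)\big)(S-y)^\circ\Big)\subset S.$$
   Context: $\psi^*$ is the Legendre transform, $\partial\psi^*(Z)=\bigcup_{z\in Z}\partial\psi^*(z)$. For a convex set $E$ containing $0$, $E^\circ=\{z: z\cdot x\le1\ \forall x\in E\}$ is its polar body and $aE^\circ=\{az:z\in E^\circ\}$. *)

From mathcomp Require Import all_boot all_order all_algebra.
From mathcomp Require Import all_classical all_reals.
From mathcomp Require Import ereal.
Set Implicit Arguments. Unset Strict Implicit. Unset Printing Implicit Defensive.
Import Order.TTheory GRing.Theory Num.Theory.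
Local Open Scope classical_set_scope.
Local Open Scope ring_scope.

Section Defs.
Variables (R : realType) (n : nat).
Implicit Types (x y z w : 'rV[R]_n) (f : 'rV[R]_n -> R).

Definition dotv x y : R := \sum_(i < n) x ord0 i * y ord0 i.

Definition convex_fun f : Prop :=
  forall x y (l : R), 0 <= l <= 1 ->
    f ((1 - l) *: x + l *: y) <= (1 - l) * f x + l * f y.

Definition subdiff f x : set 'rV[R]_n :=
  [set g | forall w, f x + dotv g (w - x) <= f w].

Definition legendre f : 'rV[R]_n -> \bar R :=
  fun z => ereal_sup [set (dotv x z - f x)%:E | x in [set: 'rV[R]_n]].

Definition esubdiff (F : 'rV[R]_n -> \bar R) z : set 'rV[R]_n :=
  [set g | F z \is a fin_num /\ forall w, (F z + (dotv g (w - z))%:E <= F w)%E].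

Definition subdiff_img (F : 'rV[R]_n -> \bar R) (Z : set 'rV[R]_n) : set 'rV[R]_n :=
  \bigcup_(z in Z) esubdiff F z.

Definition sublevel f (t : R) : set 'rV[R]_n := [set x | f x <= t].

Definition polar (E : set 'rV[R]_n) : set 'rV[R]_n :=
  [set z | forall x, E x -> dotv z x <= 1].

Definition scale_set (a : R) (E : set 'rV[R]_n) : set 'rV[R]_n :=
  [set a *: z | z in E].

Definition translate (E : set 'rV[R]_n) y : set 'rV[R]_n :=
  [set x - y | x in E].
End Defs.

From mathcomp Require Import all_boot all_order all_algebra.
From mathcomp Require Import all_classical all_reals.
From mathcomp Require Import ereal.
From mathcomp Require Import ring lra.
Set Implicit Arguments. Unset Strict Implicit. Unset Printing Implicit Defensive.
Import Order.TTheory GRing.Theory Num.Theory.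
Local Open Scope classical_set_scope.
Local Open Scope ring_scope.

(* 1. Every convex function psi : R^n -> R has a subgradient at every point.
      This is proved by induction on the number k of coordinates that a
      displacement may use: a subgradient for displacements in span(e_0..e_k-1)
      is extended to span(e_0..e_k) by choosing its k-th coordinate between the
      left and right difference quotients of psi in direction e_k, which are
      ordered by convexity.
   2. If u is a subgradient of psi^* at z, comparing psi^* at z with psi^* at a
      subgradient g of psi at u gives  psi u + psi^* z <= <u, z>, and since
      psi^* z >= <y, z> - psi y for every y, z is a subgradient of psi at u.
   3. With z = a w, w in (S - y)^o: if psi u > t, the point of the segment
      [y, u] where psi reaches psi y + 2a stays in S by convexity, and testing
      w against it turns the subgradient inequality into 2a <= a; so a = 0,
      and then the subgradient inequality gives psi u <= psi y <= t. *)

Section InnerProduct.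
Variables (R : realType) (n : nat).
Implicit Types (x y z : 'rV[R]_n).

Lemma dotvC x y : dotv x y = dotv y x.
Proof. by apply: eq_bigr => i _; rewrite mulrC. Qed.

Lemma dotvDl x y z : dotv (x + y) z = dotv x z + dotv y z.
Proof. by rewrite /dotv -big_split; apply: eq_bigr => i _; rewrite mxE mulrDl. Qed.

Lemma dotvZl a x z : dotv (a *: x) z = a * dotv x z.
Proof. by rewrite /dotv mulr_sumr; apply: eq_bigr => i _; rewrite mxE mulrA. Qed.

Lemma dotvBl x y z : dotv (x - y) z = dotv x z - dotv y z.
Proof. by rewrite dotvDl -scaleN1r dotvZl mulN1r. Qed.

Lemma dotvDr x y z : dotv z (x + y) = dotv z x + dotv z y.
Proof. by rewrite !(dotvC z) dotvDl. Qed.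

Lemma dotvZr a x z : dotv z (a *: x) = a * dotv z x.
Proof. by rewrite !(dotvC z) dotvZl. Qed.

Lemma dotvBr x y z : dotv z (x - y) = dotv z x - dotv z y.
Proof. by rewrite !(dotvC z) dotvBl. Qed.

Lemma dotvNr x z : dotv z (- x) = - dotv z x.
Proof. by rewrite -scaleN1r dotvZr mulN1r. Qed.

Lemma dotv0r x : dotv x 0 = 0.
Proof. by rewrite /dotv big1 // => i _; rewrite mxE mulr0. Qed.

Lemma dotv_delta x (k : 'I_n) : dotv x (delta_mx 0 k) = x 0 k.
Proof.
rewrite /dotv (bigD1 k) //= big1 => [|i ik]; rewrite mxE.
  by rewrite !eqxx mulr1 addr0.
by rewrite (negbTE ik) andbF mulr0.
Qed.

End InnerProduct.

Section SubgradientExistence.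
Variables (R : realType) (n : nat) (psi : 'rV[R]_n -> R).
Hypothesis psi_cvx : convex_fun psi.
Variable x : 'rV[R]_n.

Definition low_supported (k : nat) (d : 'rV[R]_n) : Prop :=
  forall i : 'I_n, (k <= i)%N -> d 0 i = 0.

Definition partial_subgrad (k : nat) (g : 'rV[R]_n) : Prop :=
  forall d, low_supported k d -> psi x + dotv g d <= psi (x + d).

Lemma low_supported0 k : low_supported k 0.
Proof. by move=> i _; rewrite mxE. Qed.

Lemma partial_slopes_ordered k g e d d' r s :
  partial_subgrad k g -> low_supported k d -> low_supported k d' ->
  0 < r -> 0 < s ->
  (psi x + dotv g d' - psi (x + d' - r *: e)) / r <=
  (psi (x + d + s *: e) - psi x - dotv g d) / s.
Proof.
move=> hg hd hd' r0 s0.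
have rs0 : 0 < r + s by lra.
set l := r / (r + s).
have l01 : 0 <= l <= 1.
  apply/andP; split; first by rewrite /l divr_ge0 // ltW.
  by rewrite /l ler_pdivrMr // mul1r; lra.
set m := (1 - l) *: d' + l *: d.
have hm : low_supported k m by move=> i ki; rewrite !mxE hd // hd' // !mulr0 addr0.
have mid : (1 - l) *: (x + d' - r *: e) + l *: (x + d + s *: e) = x + m.
  by apply/rowP => i; rewrite !mxE /l; field; lra.
have cvx_mid := psi_cvx (x + d' - r *: e) (x + d + s *: e) l01.
rewrite mid in cvx_mid.
have sub_mid := hg m hm.
rewrite /m dotvDr !dotvZr in sub_mid.
set A := psi x + dotv g d' - psi (x + d' - r *: e).
set B := psi (x + d + s *: e) - psi x - dotv g d.
have convex_comb : (1 - l) * A <= l * B by rewrite /A /B; lra.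
have weighted : s * A <= r * B.
  have one_minus_l : 1 - l = s / (r + s) by rewrite /l; field; lra.
  move: convex_comb; rewrite one_minus_l /l -!mulrA (mulrC _^-1) (mulrC _^-1) !mulrA.
  by rewrite ler_pM2r ?invr_gt0.
by rewrite ler_pdivrMr // mulrAC ler_pdivlMr // mulrC (mulrC B).
Qed.

Lemma low_supported_peel k (kn : (k < n)%N) d :
  low_supported k.+1 d ->
  low_supported k (d - d 0 (Ordinal kn) *: delta_mx 0 (Ordinal kn)).
Proof.
move=> hd i ki; rewrite !mxE.
have [->|ik] := eqVneq i (Ordinal kn); first by rewrite !eqxx mulr1 subrr.
rewrite andbF mulr0 subr0 hd // ltn_neqAle ki andbT.
by apply: contra ik => /eqP ik; apply/eqP/val_inj.
Qed.

(* Inductive step: the k-th coordinate of the subgradient is chosen as the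
   supremum of the left difference quotients in direction e_k. *)
Lemma partial_subgrad_extend k : (k < n)%N ->
  (exists g, partial_subgrad k g) -> exists g, partial_subgrad k.+1 g.
Proof.
move=> kn [g hg].
pose e : 'rV[R]_n := delta_mx 0 (Ordinal kn).
pose left_quot d' r := (psi x + dotv g d' - psi (x + d' - r *: e)) / r.
pose right_quot d s := (psi (x + d + s *: e) - psi x - dotv g d) / s.
pose L := [set l | exists d' r, [/\ low_supported k d', 0 < r & l = left_quot d' r]].
have L0 : L !=set0.
  by exists (left_quot 0 1), 0, 1; split=> //; exact: low_supported0.
have L_ub d s : low_supported k d -> 0 < s -> ubound L (right_quot d s).
  move=> hd s0 _ [d' [r [hd' r0 ->]]].
  exact: (partial_slopes_ordered e hg hd hd' r0 s0).
have hsup : has_sup L.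
  split=> //; exists (right_quot 0 1).
  by apply: L_ub; [exact: low_supported0 | exact: ltr01].
pose c := sup L.
exists (g + (c - g 0 (Ordinal kn)) *: e) => d hd.
pose s := d 0 (Ordinal kn); pose d0 := d - s *: e.
have hd0 : low_supported k d0 by apply: low_supported_peel.
have -> : dotv (g + (c - g 0 (Ordinal kn)) *: e) d = dotv g d0 + c * s.
  rewrite dotvDl dotvZl (dotvC e) dotv_delta /d0 dotvBr dotvZr dotv_delta -/s.
  ring.
have -> : d = d0 + s *: e by rewrite subrK.
rewrite (addrA x).
have [s0|s0|->] := ltgtP s 0.
- have inL : L (left_quot d0 (- s)) by exists d0, (- s); rewrite oppr_gt0.
  have := sup_upper_bound hsup inL.
  by rewrite /left_quot -/c ler_pdivrMr ?oppr_gt0 // scaleNr opprK; lra.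
- have := ge_sup L0 (L_ub d0 s hd0 s0).
  by rewrite /right_quot -/c ler_pdivlMr //; lra.
- by rewrite scale0r addr0 mulr0 addr0; exact: hg.
Qed.

Lemma subgrad_exists : exists g, subdiff psi x g.
Proof.
have all_k k : (k <= n)%N -> exists g, partial_subgrad k g.
  elim: k => [_|k IHk kn].
    exists 0 => d hd.
    have -> : d = 0 by apply/rowP => i; rewrite (hd i) // mxE.
    by rewrite dotv0r !addr0.
  exact: partial_subgrad_extend kn (IHk (ltnW kn)).
have [g hg] := all_k n (leqnn n).
exists g => u.
have full : low_supported n (u - x) by move=> i; rewrite leqNgt ltn_ord.
by have := hg _ full; rewrite (addrC x) subrK.
Qed.

End SubgradientExistence.

Section LegendreSubgradient.
Variables (R : realType) (n : nat) (psi : 'rV[R]_n -> R).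
Implicit Types (u y z g : 'rV[R]_n).

Lemma legendre_ge y z : ((dotv y z - psi y)%:E <= legendre psi z)%E.
Proof. by apply: ereal_sup_ubound; exists y. Qed.

Lemma legendre_le_subgrad u g :
  subdiff psi u g -> (legendre psi g <= (dotv u g - psi u)%:E)%E.
Proof.
move=> hg; apply: ge_ereal_sup => _ [v _ <-]; rewrite lee_fin.
by have := hg v; rewrite dotvBr (dotvC g v) (dotvC g u); lra.
Qed.

(* Compare psi^*(z) >= <y, z> - psi y with
   psi^*(g) for a subgradient g of psi at u, which exists by convexity. *)
Lemma legendre_subdiff_inv u z : convex_fun psi ->
  esubdiff (legendre psi) z u -> subdiff psi u z.
Proof.
move=> cvx [fin sub] y.
have [g hg] := subgrad_exists cvx u.
have := le_trans (sub g) (legendre_le_subgrad hg).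
have := legendre_ge y z.
rewrite -(fineK fin) -EFinD !lee_fin !dotvBr (dotvC u z) (dotvC y z).
lra.
Qed.

End LegendreSubgradient.

Lemma polar_subgrad_sublevel (R : realType) (n : nat)
    (psi : 'rV[R]_n -> R) (t : R) (y u w : 'rV[R]_n) :
  convex_fun psi -> psi y <= t -> polar (translate (sublevel psi t) y) w ->
  subdiff psi u ((t - psi y) / 2 *: w) -> psi u <= t.
Proof.
move=> cvx hy hw sub_u; rewrite leNgt; apply/negP => ht.
set a := (t - psi y) / 2 in sub_u.
have increase_bound : psi u - psi y <= a * dotv w (u - y).
  by have := sub_u y; rewrite dotvZl -opprB dotvNr; lra.
set D := psi u - psi y in increase_bound.
have Dpos : 0 < D by rewrite /D; lra.
set th := 2 * a / D.
have thD : th * D = 2 * a by rewrite /th; field; lra.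
have th01 : 0 <= th <= 1.
  by apply/andP; split; rewrite /th ?divr_ge0 ?ler_pdivrMr /a /D; lra.
have in_S : psi ((1 - th) *: y + th *: u) <= t.
  apply: le_trans (cvx y u th th01) _.
  have -> : (1 - th) * psi y + th * psi u = psi y + th * D by rewrite /D; ring.
  by rewrite thD /a; lra.
have polar_test : th * dotv w (u - y) <= 1.
  rewrite -dotvZr; apply: hw; exists ((1 - th) *: y + th *: u) => //.
  by apply/rowP => i; rewrite !mxE; ring.
have a_ge0 : 0 <= a by rewrite /a; lra.
have [a0|a_ne0] := eqVneq a 0; first by rewrite a0 mul0r in increase_bound; lra.
have a_pos : 0 < a by rewrite lt_neqAle eq_sym a_ne0.
have : th * D <= a * (th * dotv w (u - y)).
  by rewrite mulrCA ler_wpM2l ?(andP th01).1.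
have : a * (th * dotv w (u - y)) <= a by rewrite -[leRHS]mulr1 ler_wpM2l.
by rewrite thD; lra.
Qed.

Theorem mainTheorem13 (R : realType) (n : nat) (psi : 'rV[R]_n -> R)
  (t : R) (y : 'rV[R]_n) :
  convex_fun psi -> psi 0 = 0 -> subdiff psi 0 0 -> 0 < t ->
  sublevel psi t y ->
  subdiff_img (legendre psi)
    (scale_set ((t - psi y) / 2) (polar (translate (sublevel psi t) y)))
  `<=` sublevel psi t.
Proof.
move=> cvx _ _ _ hy u [_ [w hw <-] hu].
apply: (polar_subgrad_sublevel cvx hy hw).
exact: legendre_subdiff_inv.
Qed.
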